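(* Let $g$ be a left-invariant Riemannian metric on $SU(2)$. Then there are left-invariant vector fields $X_1,X_2,X_3$ on $SU(2)$ with $[X_1,X_2]=X_3$, $[X_2,X_3]=X_1$, $[X_3,X_1]=X_2$ (a Milnor frame) and positive numbers $f_1,f_2,f_3$ such that $g=f_1^2\,\omega_1\otimes\omega_1+f_2^2\,\omega_2\otimes\omega_2+f_3^2\,\omega_3\otimes\omega_3$, where $\omega_i$ is the one-form dual to $X_i$. Moreover, $g$ passes to an $SU(2)$-invariant Riemannian metric on $SU(2)/\mathbb{Z}_n$ if and only if one of the following holds: (i) $n\in\{1,2\}$; (ii) $n=4$, and after possibly altering the choice of diagonalising Milnor frame, $X_1$ is a scalar multiple of $u_1$ and $\mathrm{span}\{X_2,X_3\}=\mathrm{span}\{u_2,u_3\}$; (iii) $n\in\mathbb{N}\setminus\{1,2,4\}$, and the diagonalising Milnor frame can be chosen with $X_i=\frac{u_i}{2}$, and in this basis $f_2=f_3$.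
   Context: $SU(2)=\{\begin{pmatrix}a&-\bar b\\ b&\bar a\end{pmatrix}: |a|^2+|b|^2=1\}$ with Lie algebra spanned by $u_1=\begin{pmatrix}i&0\\0&-i\end{pmatrix}$, $u_2=\begin{pmatrix}0&i\\ i&0\end{pmatrix}$, $u_3=\begin{pmatrix}0&-1\\1&0\end{pmatrix}$, satisfying $[u_1,u_2]=2u_3$, $[u_2,u_3]=2u_1$, $[u_3,u_1]=2u_2$. $\mathbb{Z}_n=\{\mathrm{diag}(e^{2\pi ik/n},e^{-2\pi ik/n}):k=0,\dots,n-1\}$ acts on $SU(2)$ by right multiplication, and $SU(2)/\mathbb{Z}_n$ carries the left $SU(2)$-action; a left-invariant metric ''passes to'' the quotient if it induces a Riemannian metric on $SU(2)/\mathbb{Z}_n$, which is then $SU(2)$-invariant. *)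

From mathcomp Require Import all_boot all_order all_algebra.
From mathcomp Require Import complex.
From mathcomp Require Import all_classical all_reals trigo.
Import GRing.Theory Num.Theory ComplexField.

Set Implicit Arguments.
Unset Strict Implicit.
Unset Printing Implicit Defensive.

Local Open Scope ring_scope.
Local Open Scope complex_scope.

Section SU2.
Variable R : realType.

Definition i1 : 'I_3 := inord 0.
Definition i2 : 'I_3 := inord 1.
Definition i3 : 'I_3 := inord 2.

Definition u1 : 'M[R[i]]_2 :=
  \matrix_(a < 2, b < 2)
    if (a == 0 :> nat) && (b == 0 :> nat) then 0 +i* 1
    else if (a == 1 :> nat) && (b == 1 :> nat) then 0 +i* (-1) else 0.
Definition u2 : 'M[R[i]]_2 :=
  \matrix_(a < 2, b < 2) if a != b then 0 +i* 1 else 0.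
Definition u3 : 'M[R[i]]_2 :=
  \matrix_(a < 2, b < 2)
    if (a == 0 :> nat) && (b == 1 :> nat) then (-1)%:C
    else if (a == 1 :> nat) && (b == 0 :> nat) then 1%:C else 0.

Definition u (j : 'I_3) : 'M[R[i]]_2 :=
  if j == i1 then u1 else if j == i2 then u2 else u3.

(* A left-invariant vector field on SU(2) is identified with its value at the
   identity, an element of su(2) = span_R{u1,u2,u3}; we represent it by its
   real coordinate row vector x in the basis (u1,u2,u3). *)
Definition su2 (x : 'rV[R]_3) : 'M[R[i]]_2 := \sum_(j < 3) (x 0 j)%:C *: u j.

Definition ucoord (j : 'I_3) : 'rV[R]_3 := delta_mx 0 j.

(* Lie bracket of left-invariant vector fields = matrix commutator in su(2):
   [x, y] = z *)
Definition is_bracket (x y z : 'rV[R]_3) : Prop :=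
  su2 x *m su2 y - su2 y *m su2 x = su2 z.

(* A left-invariant Riemannian metric on SU(2) = an inner product on su(2),
   given by its Gram matrix G in the basis (u1,u2,u3). *)
Definition metric_val (G : 'M[R]_3) (x y : 'rV[R]_3) : R := (x *m G *m y^T) 0 0.

Definition left_inv_metric (G : 'M[R]_3) : Prop :=
  G^T = G /\ forall x : 'rV[R]_3, x != 0 -> 0 < metric_val G x x.

Definition frame_mx (X : 'I_3 -> 'rV[R]_3) : 'M[R]_3 := \matrix_(k < 3) X k.

Definition milnor_frame (X : 'I_3 -> 'rV[R]_3) : Prop :=
  frame_mx X \in unitmx /\
  is_bracket (X i1) (X i2) (X i3) /\
  is_bracket (X i2) (X i3) (X i1) /\
  is_bracket (X i3) (X i1) (X i2).

Definition dual_form (X : 'I_3 -> 'rV[R]_3) (k : 'I_3) (y : 'rV[R]_3) : R :=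
  (y *m invmx (frame_mx X)) 0 k.

Definition diagonalises (G : 'M[R]_3) (X : 'I_3 -> 'rV[R]_3) (f : 'I_3 -> R)
  : Prop :=
  (forall k, 0 < f k) /\
  forall x y : 'rV[R]_3,
    metric_val G x y =
    \sum_(k < 3) f k ^+ 2 * dual_form X k x * dual_form X k y.

Definition diag_milnor_frame (G : 'M[R]_3) (X : 'I_3 -> 'rV[R]_3)
  (f : 'I_3 -> R) : Prop :=
  milnor_frame X /\ diagonalises G X f.

Definition zn_elt (n k : nat) : 'M[R[i]]_2 :=
  let t : R := 2 * pi * k%:R / n%:R in
  let e : R[i] := cos t +i* sin t in
  diag_mx (\row_(a < 2) if a == 0 :> nat then e else e^-1).

(* g passes to SU(2)/Z_n (Z_n acting by right multiplication): g is invariant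
   under right translation R_h for all h in Z_n.  For a left-invariant metric,
   (R_h^* g)(X, Y) = g(Ad_{h^-1} X, Ad_{h^-1} Y) on left-invariant X, Y, where
   Ad_{h^-1} X = h^-1 X h. *)
Definition passes_to_quotient (G : 'M[R]_3) (n : nat) : Prop :=
  forall k : nat, (k < n)%N ->
  forall x y x' y' : 'rV[R]_3,
    su2 x' = invmx (zn_elt n k) *m su2 x *m zn_elt n k ->
    su2 y' = invmx (zn_elt n k) *m su2 y *m zn_elt n k ->
    metric_val G x' y' = metric_val G x y.

End SU2.

Arguments ucoord {R} j.
Arguments u1 {R}.
Arguments u2 {R}.
Arguments u3 {R}.
Arguments u {R} j.
Arguments zn_elt {R} n k.

(* A left-invariant metric is an inner product G on su(2) = R^3 (coordinates in the basis
   u1, u2, u3), on which the bracket is twice the cross product.  Hence X_j = p_j / 2 is a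
   Milnor frame for every positively oriented orthonormal basis p of R^3, and it diagonalises
   G as soon as p is G-orthogonal; such a p is obtained from a real eigenvector of G, completed
   to an oriented basis and rotated in the orthogonal plane.
   Conjugation by diag(e^(i t), e^(-i t)) acts on su(2) as the rotation of angle 2t about u1,
   so g passes to SU(2)/Z_n iff G is invariant under the rotations of angle 4 pi k / n.  These
   are trivial for n = 1, 2; for n = 4 they are half-turns, whose invariants are the G in which
   u1 is orthogonal to span{u2, u3}; for any other n the angle 4 pi / n is not a multiple of pi
   and the invariant G are diagonal with equal u2- and u3-entries. *)

From mathcomp Require Import all_boot all_order all_algebra.
From mathcomp Require Import complex polyrcf.
From mathcomp Require Import all_classical all_reals trigo.
From mathcomp Require Import ring lra zify.
From mathcomp Require Import nsatz_realtype.
Import Order.TTheory GRing.Theory Num.Theory ComplexField.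

Set Implicit Arguments.
Unset Strict Implicit.
Unset Printing Implicit Defensive.

Local Open Scope ring_scope.

Section Coordinates.
Variable R : realType.
Implicit Types (x y : 'rV[R]_3) (G : 'M[R]_3).

Lemma i1E : i1 = ord0. Proof. by apply/val_inj; rewrite /= inordK. Qed.
Lemma i2E : i2 = lift ord0 ord0. Proof. by apply/val_inj; rewrite /= inordK. Qed.
Lemma i3E : i3 = lift ord0 (lift ord0 ord0). Proof. by apply/val_inj; rewrite /= inordK. Qed.

Lemma ord3P (j : 'I_3) : [\/ j = i1, j = i2 | j = i3].
Proof.
rewrite i1E i2E i3E.
by case: j => [[|[|[|//]]] lt_j3]; [constructor 1|constructor 2|constructor 3]; apply: val_inj.
Qed.

Lemma ord3_eqE :
  ((i1 == i2) = false) * ((i1 == i3) = false) * ((i2 == i1) = false) *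
  ((i2 == i3) = false) * ((i3 == i1) = false) * ((i3 == i2) = false).
Proof. by rewrite i1E i2E i3E. Qed.

Lemma sum3 (V : nmodType) (F : 'I_3 -> V) : \sum_j F j = F i1 + F i2 + F i3.
Proof. by rewrite i1E i2E i3E !big_ord_recl big_ord0 addr0 addrA. Qed.

Definition vec3 (a b c : R) : 'rV[R]_3 := \row_j [:: a; b; c]`_j.

Lemma vec3E1 a b c : vec3 a b c 0 i1 = a. Proof. by rewrite i1E mxE. Qed.
Lemma vec3E2 a b c : vec3 a b c 0 i2 = b. Proof. by rewrite i2E mxE. Qed.
Lemma vec3E3 a b c : vec3 a b c 0 i3 = c. Proof. by rewrite i3E mxE. Qed.
Definition vec3E := (vec3E1, vec3E2, vec3E3).

Lemma vec3P x y :
  x 0 i1 = y 0 i1 -> x 0 i2 = y 0 i2 -> x 0 i3 = y 0 i3 -> x = y.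
Proof. by move=> e1 e2 e3; apply/rowP => j; case: (ord3P j) => ->. Qed.

Lemma ucoordE :
  [/\ ucoord i1 = vec3 1 0 0, ucoord i2 = vec3 0 1 0 & ucoord i3 = vec3 0 0 1 :> 'rV[R]_3].
Proof. by split; apply: vec3P; rewrite !vec3E !mxE ?i1E ?i2E ?i3E. Qed.

Lemma metric_valE G x y : metric_val G x y =
  x 0 i1 * (G i1 i1 * y 0 i1 + G i1 i2 * y 0 i2 + G i1 i3 * y 0 i3) +
  x 0 i2 * (G i2 i1 * y 0 i1 + G i2 i2 * y 0 i2 + G i2 i3 * y 0 i3) +
  x 0 i3 * (G i3 i1 * y 0 i1 + G i3 i2 * y 0 i2 + G i3 i3 * y 0 i3).
Proof. by rewrite /metric_val !(mxE, sum3); ring. Qed.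

Lemma metric_valC G x y : G^T = G -> metric_val G x y = metric_val G y x.
Proof.
move=> sym_G; rewrite /metric_val -[in LHS](trmxK (x *m G *m y^T)).
by rewrite mxE !trmx_mul trmxK sym_G mulmxA.
Qed.

End Coordinates.

Section VectorAlgebra.
Variable R : realType.
Implicit Types (x y z v w : 'rV[R]_3) (G : 'M[R]_3) (a : R).

Definition dot x y : R := (x *m y^T) 0 0.

Lemma dotE x y : dot x y = x 0 i1 * y 0 i1 + x 0 i2 * y 0 i2 + x 0 i3 * y 0 i3.
Proof. by rewrite /dot mxE sum3 !mxE. Qed.

Lemma dotC x y : dot x y = dot y x.
Proof. by rewrite !dotE; ring. Qed.

Lemma dotDl x y z : dot (x + y) z = dot x z + dot y z.
Proof. by rewrite !dotE !mxE; ring. Qed.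

Lemma dotZl a x y : dot (a *: x) y = a * dot x y.
Proof. by rewrite !dotE !mxE; ring. Qed.

Lemma dotDr x y z : dot x (y + z) = dot x y + dot x z.
Proof. by rewrite dotC dotDl !(dotC x). Qed.

Lemma dotZr a x y : dot x (a *: y) = a * dot x y.
Proof. by rewrite dotC dotZl dotC. Qed.

Lemma dot_gt0 x : x != 0 -> 0 < dot x x.
Proof.
move=> x_neq0; rewrite lt_neqAle eq_sym dotE; apply/andP; split; last by nra.
apply: contra x_neq0 => /eqP x0; apply/eqP/vec3P; rewrite !mxE; nra.
Qed.

Definition cross x y := vec3
  (x 0 i2 * y 0 i3 - x 0 i3 * y 0 i2)
  (x 0 i3 * y 0 i1 - x 0 i1 * y 0 i3)
  (x 0 i1 * y 0 i2 - x 0 i2 * y 0 i1).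

Lemma crossDl x y z : cross (x + y) z = cross x z + cross y z.
Proof. by apply: vec3P; rewrite /cross !(vec3E, mxE); ring. Qed.

Lemma crossZl a x y : cross (a *: x) y = a *: cross x y.
Proof. by apply: vec3P; rewrite /cross !(vec3E, mxE); ring. Qed.

Lemma crossC x y : cross x y = - cross y x.
Proof. by apply: vec3P; rewrite /cross !(vec3E, mxE); ring. Qed.

Lemma crossDr x y z : cross x (y + z) = cross x y + cross x z.
Proof. by apply: vec3P; rewrite /cross !(vec3E, mxE); ring. Qed.

Lemma crossZr a x y : cross x (a *: y) = a *: cross x y.
Proof. by apply: vec3P; rewrite /cross !(vec3E, mxE); ring. Qed.

Lemma crossxx x : cross x x = 0.
Proof. by apply: vec3P; rewrite /cross !(vec3E, mxE); ring. Qed.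

Lemma dot_cross x y : dot (cross x y) (cross x y) = dot x x * dot y y - dot x y ^+ 2.
Proof. by rewrite !dotE /cross !vec3E; ring. Qed.

Lemma dot_crossl x y : dot x (cross x y) = 0.
Proof. by rewrite dotE /cross !vec3E; ring. Qed.

Lemma dot_crossr x y : dot y (cross x y) = 0.
Proof. by rewrite dotE /cross !vec3E; ring. Qed.

Lemma cross_cross x y z : cross x (cross y z) = dot x z *: y - dot x y *: z.
Proof. by apply: vec3P; rewrite /cross !dotE !(vec3E, mxE); ring. Qed.

Lemma metric_valDl G x y z : metric_val G (x + y) z = metric_val G x z + metric_val G y z.
Proof. by rewrite !metric_valE !mxE; ring. Qed.

Lemma metric_valZl G a x y : metric_val G (a *: x) y = a * metric_val G x y.
Proof. by rewrite !metric_valE !mxE; ring. Qed.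

Lemma metric_valDr G x y z : metric_val G x (y + z) = metric_val G x y + metric_val G x z.
Proof. by rewrite !metric_valE !mxE; ring. Qed.

Lemma metric_valZr G a x y : metric_val G x (a *: y) = a * metric_val G x y.
Proof. by rewrite !metric_valE !mxE; ring. Qed.

End VectorAlgebra.

Section LieAlgebra.
Variable R : realType.
Implicit Types x y z : 'rV[R]_3.
Local Open Scope complex_scope.

Definition su2_mx (a b c : R) : 'M[R[i]]_2 :=
  \matrix_(p < 2, q < 2)
    if p == 0 then (if q == 0 then 0 +i* a else (- c) +i* b)
    else (if q == 0 then c +i* b else 0 +i* (- a)).

Lemma ord2P (j : 'I_2) : j = 0 \/ j = 1.
Proof. by case: j => [[|[|//]] ?]; [left|right]; apply: val_inj. Qed.

Lemma su2E x : su2 x = su2_mx (x 0 i1) (x 0 i2) (x 0 i3).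
Proof.
have [uE1 uE2 uE3] : [/\ u i1 = @u1 R, u i2 = @u2 R & u i3 = @u3 R].
  by rewrite /u i1E i2E i3E.
apply/matrixP => p q; rewrite /su2 summxE sum3 uE1 uE2 uE3 !mxE.
by case: (ord2P p) => ->; case: (ord2P q) => -> /=; simpc.
Qed.

Lemma su2_inj : injective (@su2 R).
Proof.
move=> x y; rewrite !su2E => /matrixP eq_xy.
have := eq_xy 0 0; have := eq_xy 1 0; rewrite !mxE /= => -[e3 e2] [e1].
exact: vec3P.
Qed.

Lemma su2_mx_commutator a b c a' b' c' :
  su2_mx a b c *m su2_mx a' b' c' - su2_mx a' b' c' *m su2_mx a b c =
  su2_mx (2 * (b * c' - c * b')) (2 * (c * a' - a * c')) (2 * (a * b' - b * a')).
Proof.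
apply/matrixP => p q; rewrite !mxE !big_ord_recl !big_ord0 !mxE /=.
by case: (ord2P p) => ->; case: (ord2P q) => -> /=; simpc;
  apply/eqP; rewrite eq_complex /=; apply/andP; split; apply/eqP; ring.
Qed.

Lemma is_bracketP x y z : is_bracket x y z <-> z = 2 *: cross x y.
Proof.
rewrite /is_bracket (su2E x) (su2E y) su2_mx_commutator.
have -> : su2_mx (2 * (x 0 i2 * y 0 i3 - x 0 i3 * y 0 i2))
    (2 * (x 0 i3 * y 0 i1 - x 0 i1 * y 0 i3)) (2 * (x 0 i1 * y 0 i2 - x 0 i2 * y 0 i1))
    = su2 (2 *: cross x y) by rewrite su2E /cross !(vec3E, mxE).
by split => [/esym/su2_inj | ->].
Qed.

End LieAlgebra.

Section TorusAction.
Variable R : realType.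
Implicit Types (x y : 'rV[R]_3) (G : 'M[R]_3).
Local Open Scope complex_scope.

Definition torus_mx (e : R[i]) : 'M[R[i]]_2 :=
  diag_mx (\row_(p < 2) if p == 0 :> nat then e else e^-1).

Lemma invmx_right_inverse (F : comUnitRingType) n (A B : 'M[F]_n) :
  A *m B = 1%:M -> invmx A = B.
Proof.
move=> AB1; have [unit_A _] := mulmx1_unit AB1.
by rewrite -[invmx A]mulmx1 -AB1 mulmxA mulVmx ?mul1mx.
Qed.

Lemma invmx_torus e : e != 0 -> invmx (torus_mx e) = torus_mx e^-1.
Proof.
move=> e_neq0; apply: invmx_right_inverse; apply/matrixP => p q.
rewrite mul_diag_mx !mxE invrK.
by case: (ord2P p) => ->; case: (ord2P q) => -> /=; rewrite ?mulr0 ?mulfV ?mulVf.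
Qed.

Definition rot23 (c s : R) x :=
  vec3 (x 0 i1) (c * x 0 i2 + s * x 0 i3) (c * x 0 i3 - s * x 0 i2).

(* [a^2 - b^2] and [2 a b] are the cosine and sine of twice the argument of [a + i b]. *)
Lemma torus_conj_su2 (a b : R) x : a ^+ 2 + b ^+ 2 = 1 ->
  invmx (torus_mx (a +i* b)) *m su2 x *m torus_mx (a +i* b) =
  su2 (rot23 (a ^+ 2 - b ^+ 2) (2 * a * b) x).
Proof.
move=> norm_e.
have inv_e : (a +i* b)^-1 = a +i* (- b).
  by rewrite /GRing.inv /= norm_e; simpc; rewrite !divr1.
have e_neq0 : a +i* b != 0.
  apply/eqP => -[a0 b0]; move: norm_e; rewrite a0 b0 expr0n /= addr0 => /eqP.
  by rewrite eq_sym oner_eq0.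
rewrite invmx_torus // /torus_mx mul_diag_mx mul_mx_diag !su2E /rot23 !vec3E invrK inv_e.
(* [nsatz] treats [2] and [_ ^+ 2] as atoms *)
have -> : 2 * a * b = a * b + a * b by ring.
move: norm_e; rewrite !expr2 => norm_e.
apply/matrixP => p q; rewrite !mxE.
by case: (ord2P p) => ->; case: (ord2P q) => -> /=; simpc;
  apply/eqP; rewrite eq_complex /=; apply/andP; split; apply/eqP; nsatz.
Qed.

Definition zn_rot_angle n k : R := 4 * pi * k%:R / n%:R.

Lemma zn_conj_su2 n k x :
  invmx (zn_elt n k) *m su2 x *m zn_elt n k =
  su2 (rot23 (cos (zn_rot_angle n k)) (sin (zn_rot_angle n k)) x).
Proof.
pose t : R := 2 * pi * k%:R / n%:R.
have -> : zn_rot_angle n k = t + t by rewrite /zn_rot_angle /t; ring.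
rewrite cosD sinD -!expr2 -[zn_elt n k]/(torus_mx (cos t +i* sin t)).
rewrite torus_conj_su2 ?cos2Dsin2 //; congr (su2 (rot23 _ _ _)); ring.
Qed.

Definition rot_invariant G (c s : R) :=
  forall x y, metric_val G (rot23 c s x) (rot23 c s y) = metric_val G x y.

Lemma passes_to_quotientP G n : passes_to_quotient G n <->
  forall k, (k < n)%N -> rot_invariant G (cos (zn_rot_angle n k)) (sin (zn_rot_angle n k)).
Proof.
split=> inv_G k lt_kn x y.
  by apply: (inv_G k lt_kn x y); rewrite zn_conj_su2.
by move=> x' y'; rewrite !zn_conj_su2 => /su2_inj -> /su2_inj ->; apply: inv_G.
Qed.

End TorusAction.

Section RotationInvariance.
Variable R : realType.
Implicit Types (G : 'M[R]_3) (c s : R).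

Definition u1_orthogonal G := G i1 i2 = 0 /\ G i1 i3 = 0.

Definition u1_axisymmetric G :=
  [/\ G i1 i2 = 0, G i1 i3 = 0, G i2 i3 = 0 & G i2 i2 = G i3 i3].

Lemma sym3E G : G^T = G ->
  [/\ G i2 i1 = G i1 i2, G i3 i1 = G i1 i3 & G i3 i2 = G i2 i3].
Proof. by move=> sym_G; split; rewrite -[in LHS]sym_G mxE. Qed.

Lemma rot_invariant_id G : rot_invariant G 1 0.
Proof.
move=> x y; congr metric_val; apply: vec3P; rewrite /rot23 !vec3E; ring.
Qed.

Lemma rot_invariant_half_turn G c :
  G^T = G -> c ^+ 2 = 1 -> u1_orthogonal G -> rot_invariant G c 0.
Proof.
move=> sym_G /eqP; rewrite sqrf_eq1 => /orP[/eqP-> _ | /eqP-> [G12 G13] x y].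
  exact: rot_invariant_id.
have [G21 G31 _] := sym3E sym_G.
by rewrite !metric_valE /rot23 !vec3E G21 G31 G12 G13; ring.
Qed.

Lemma u1_orthogonal_of_half_turn G :
  G^T = G -> rot_invariant G (-1) 0 -> u1_orthogonal G.
Proof.
move=> sym_G inv_G.
have := inv_G (vec3 1 0 0) (vec3 0 1 0); have := inv_G (vec3 1 0 0) (vec3 0 0 1).
rewrite !metric_valE /rot23 !vec3E => E13 E12.
by split; lra.
Qed.

Lemma metric_val_axisymmetric G x y : G^T = G -> u1_axisymmetric G ->
  metric_val G x y =
  G i1 i1 * (x 0 i1 * y 0 i1) + G i2 i2 * (x 0 i2 * y 0 i2 + x 0 i3 * y 0 i3).
Proof.
move=> sym_G [G12 G13 G23 G22].
have [G21 G31 G32] := sym3E sym_G.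
by rewrite metric_valE G21 G31 G32 G12 G13 G23 G22; ring.
Qed.

Lemma rot_invariant_axisymmetric G c s :
  G^T = G -> c ^+ 2 + s ^+ 2 = 1 -> u1_axisymmetric G -> rot_invariant G c s.
Proof.
move=> sym_G cs2 axi_G x y; rewrite !metric_val_axisymmetric // /rot23 !vec3E.
by congr (_ + G i2 i2 * _); rewrite -[RHS]mul1r -cs2; ring.
Qed.

Lemma axisymmetric_of_rot_invariant G c s : G^T = G ->
  c ^+ 2 + s ^+ 2 = 1 -> s != 0 -> rot_invariant G c s -> u1_axisymmetric G.
Proof.
move=> sym_G cs2 s_neq0 inv_G; have [G21 G31 G32] := sym3E sym_G.
have := inv_G (vec3 1 0 0) (vec3 0 1 0); have := inv_G (vec3 1 0 0) (vec3 0 0 1).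
have := inv_G (vec3 0 1 0) (vec3 0 1 0); have := inv_G (vec3 0 1 0) (vec3 0 0 1).
rewrite !metric_valE /rot23 !vec3E G21 G31 G32 !expr2 in cs2 * => E23 E22 E13 E12.
(* two linear systems in the entries of G, with determinants (c - 1)^2 + s^2 and -2 s^2 *)
have G12 : G i1 i2 * ((c - 1) * (c - 1) + s * s) = 0 by clear -E12 E13; nsatz.
have G13 : G i1 i3 * ((c - 1) * (c - 1) + s * s) = 0 by clear -E12 E13; nsatz.
have sG23 : s * G i2 i3 + s * G i2 i3 = 0 by clear -E22 E23 cs2; nsatz.
have sG22 : s * (G i2 i2 - G i3 i3) = 0 by clear -E22 E23 cs2; nsatz.
have pos_det : (c - 1) * (c - 1) + s * s != 0.
  have ss : 0 < s * s by rewrite -expr2 exprn_even_gt0.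
  by apply: lt0r_neq0; nra.
split; apply/eqP.
- by move/eqP: G12; rewrite mulf_eq0 (negbTE pos_det) orbF.
- by move/eqP: G13; rewrite mulf_eq0 (negbTE pos_det) orbF.
- by move/eqP: sG23; rewrite -mulr2n mulrn_eq0 mulf_eq0 (negbTE s_neq0).
- by move/eqP: sG22; rewrite mulf_eq0 (negbTE s_neq0) subr_eq0.
Qed.

End RotationInvariance.

Section QuotientCriteria.
Variable R : realType.
Implicit Types (G : 'M[R]_3).

Lemma sin_natpi m : sin (m%:R * pi) = 0 :> R.
Proof.
elim: m => [|m IH]; first by rewrite mul0r sin0.
by rewrite -natr1 mulrDl mul1r sinDpi IH oppr0.
Qed.

Lemma zn_rot_angle4 k : zn_rot_angle R 4 k = k%:R * pi.
Proof. by rewrite /zn_rot_angle; field. Qed.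

Lemma zn_rot_angle_trivial n k : (n = 1 \/ n = 2)%N -> (k < n)%N ->
  cos (zn_rot_angle R n k) = 1 /\ sin (zn_rot_angle R n k) = 0.
Proof.
have angle0 m : zn_rot_angle R m 0 = 0 by rewrite /zn_rot_angle mulr0 mul0r.
case=> ->; case: k => [|[|//]] //= _; rewrite ?angle0 ?cos0 ?sin0 //.
have -> : zn_rot_angle R 2 1 = pi *+ 2 by rewrite /zn_rot_angle mulr2n; field.
by rewrite cos2pi sin2pi.
Qed.

(* 4 pi / n lies in (pi, 2 pi) for n = 3 and in (0, pi) for n >= 5. *)
Lemma sin_zn_rot_angle1_neq0 n : (0 < n)%N -> n <> 1%N -> n <> 2%N -> n <> 4%N ->
  sin (zn_rot_angle R n 1) != 0.
Proof.
move=> n_gt0 n_neq1 n_neq2 n_neq4.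
have -> : zn_rot_angle R n 1 = 4 * pi / n%:R by rewrite /zn_rot_angle mulr1.
have [-> | n_neq3] := eqVneq n 3.
  have -> : 4 * pi / 3%:R = pi / 3 + pi :> R by field.
  rewrite sinDpi oppr_eq0 lt0r_neq0 // sin_gt0_pi // divr_gt0 ?pi_gt0 //=.
  by rewrite ltr_pdivrMr // ltr_pMr ?pi_gt0 // ltr1n.
have n_gt4 : (4 < n)%N by case: n n_gt0 n_neq1 n_neq2 n_neq3 n_neq4 => [|[|[|[|[|n]]]]].
rewrite lt0r_neq0 // sin_gt0_pi // divr_gt0 ?mulr_gt0 ?pi_gt0 ?ltr0n //=.
by rewrite ltr_pdivrMr ?ltr0n // mulrC ltr_pM2l ?pi_gt0 // ltr_nat.
Qed.

Lemma passes_to_quotient_trivial G n : (n = 1 \/ n = 2)%N -> passes_to_quotient G n.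
Proof.
move=> n12; apply/passes_to_quotientP => k lt_kn.
have [-> ->] := zn_rot_angle_trivial n12 lt_kn; exact: rot_invariant_id.
Qed.

Lemma passes_to_quotient4P G : G^T = G -> passes_to_quotient G 4 <-> u1_orthogonal G.
Proof.
move=> sym_G; rewrite passes_to_quotientP; split => [inv_G | orth_G k _].
  apply: u1_orthogonal_of_half_turn => //.
  by move: (inv_G 1%N isT); rewrite zn_rot_angle4 mul1r cospi sinpi; exact: id.
rewrite zn_rot_angle4 sin_natpi; apply: rot_invariant_half_turn => //.
by rewrite -[in RHS](cos2Dsin2 (k%:R * pi)) sin_natpi expr0n addr0.
Qed.

Lemma passes_to_quotient_genericP G n : G^T = G ->
  (0 < n)%N -> n <> 1%N -> n <> 2%N -> n <> 4%N ->
  passes_to_quotient G n <-> u1_axisymmetric G.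
Proof.
move=> sym_G n_gt0 n_neq1 n_neq2 n_neq4; rewrite passes_to_quotientP.
split => [inv_G | axi_G k _]; last exact: rot_invariant_axisymmetric (cos2Dsin2 _) axi_G.
have lt1n : (1 < n)%N by case: n n_gt0 n_neq1 {inv_G n_neq2 n_neq4} => [|[|n]].
apply: axisymmetric_of_rot_invariant (cos2Dsin2 _) _ (inv_G 1%N lt1n) => //.
exact: sin_zn_rot_angle1_neq0.
Qed.

End QuotientCriteria.

Section OrientedFrames.
Variable R : realType.
Implicit Types (v w p : 'rV[R]_3) (c s : R) (G : 'M[R]_3).

Definition frame3 (p1 p2 p3 : 'rV[R]_3) (j : 'I_3) := [:: p1; p2; p3]`_j.

Lemma frame3E1 p1 p2 p3 : frame3 p1 p2 p3 i1 = p1. Proof. by rewrite i1E. Qed.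
Lemma frame3E2 p1 p2 p3 : frame3 p1 p2 p3 i2 = p2. Proof. by rewrite i2E. Qed.
Lemma frame3E3 p1 p2 p3 : frame3 p1 p2 p3 i3 = p3. Proof. by rewrite i3E. Qed.
Definition frame3E := (frame3E1, frame3E2, frame3E3).

Definition oriented_orthonormal (p1 p2 p3 : 'rV[R]_3) :=
  [/\ [/\ dot p1 p1 = 1, dot p2 p2 = 1 & dot p3 p3 = 1],
      [/\ dot p1 p2 = 0, dot p1 p3 = 0 & dot p2 p3 = 0] &
      [/\ cross p1 p2 = p3, cross p2 p3 = p1 & cross p3 p1 = p2]].

Definition g_orthogonal G (p1 p2 p3 : 'rV[R]_3) :=
  [/\ metric_val G p1 p2 = 0, metric_val G p1 p3 = 0 & metric_val G p2 p3 = 0].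

Lemma oriented_orthonormal_ucoord :
  oriented_orthonormal (ucoord i1) (ucoord i2) (ucoord i3 : 'rV[R]_3).
Proof.
have [-> -> ->] := ucoordE R.
by split; split; rewrite ?dotE ?vec3E; try ring; apply: vec3P; rewrite /cross !vec3E; ring.
Qed.

Lemma oriented_orthonormal_cross v w :
  dot v v = 1 -> dot w w = 1 -> dot v w = 0 -> oriented_orthonormal v w (cross v w).
Proof.
move=> vv ww vw; split; split => //.
- by rewrite dot_cross vv ww vw expr0n mulr1 subr0.
- exact: dot_crossl.
- exact: dot_crossr.
- by rewrite cross_cross ww dotC vw scale0r subr0 scale1r.
- by rewrite crossC cross_cross vw vv scale0r sub0r scale1r opprK.
Qed.

Lemma oriented_orthonormal_rot (p1 p2 p3 : 'rV[R]_3) c s : c ^+ 2 + s ^+ 2 = 1 ->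
  oriented_orthonormal p1 p2 p3 ->
  oriented_orthonormal p1 (c *: p2 + s *: p3) ((- s) *: p2 + c *: p3).
Proof.
move=> cs2 [[d11 d22 d33] [d12 d13 d23] [c12 c23 c31]].
have d32 : dot p3 p2 = 0 by rewrite dotC.
split; split => //; rewrite ?(dotDl, dotDr, dotZl, dotZr, crossDl, crossDr, crossZl, crossZr).
- by rewrite d22 d33 d23 d32 -[in RHS]cs2; ring.
- by rewrite d22 d33 d23 d32 -[in RHS]cs2; ring.
- by rewrite d12 d13; ring.
- by rewrite d12 d13; ring.
- by rewrite d22 d33 d23 d32; ring.
- by rewrite c12 crossC c31; apply/rowP => j; rewrite !mxE; ring.
- rewrite !crossxx c23 (crossC p3) c23 -[in RHS](scale1r p1) -cs2.
  by apply/rowP => j; rewrite !mxE; ring.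
- by rewrite c31 crossC c12; apply/rowP => j; rewrite !mxE; ring.
Qed.

End OrientedFrames.

Section PlaneRotations.
Variable R : realType.
Implicit Types (c s : R) (G : 'M[R]_3).

Lemma rotation_diagonalises_sym2 (a b d : R) :
  exists c s, c ^+ 2 + s ^+ 2 = 1 /\ (c ^+ 2 - s ^+ 2) * b + c * s * (d - a) = 0.
Proof.
suff [phi eq_phi] : exists phi : R, cos phi * b + sin phi / 2 * (d - a) = 0.
  exists (cos (phi / 2)), (sin (phi / 2)); split; first exact: cos2Dsin2.
  by rewrite -eq_phi [in RHS](splitr phi) cosD sinD; field.
have [-> | neq_da] := eqVneq d a.
  by exists (pi / 2); rewrite cos_pihalf subrr !mulr0 mul0r addr0.
exists (atan (2 * b / (a - d))).
have [/andP[lt_phi gt_phi] tan_phi] := atan_def (2 * b / (a - d)).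
have cos_gt0 : 0 < cos (atan (2 * b / (a - d))) by apply: cos_gt0_pihalf; rewrite lt_phi.
rewrite -[sin _](divfK (lt0r_neq0 cos_gt0)) -/(tan _) tan_phi; field.
by rewrite subr_eq0 eq_sym.
Qed.

Lemma eqmx_col_rot m (x y : 'rV[R]_m) c s : c ^+ 2 + s ^+ 2 = 1 ->
  (col_mx (c *: x + s *: y) ((- s) *: x + c *: y) == col_mx x y)%MS.
Proof.
move=> cs2; apply/andP; split.
  suff -> : col_mx (c *: x + s *: y) ((- s) *: x + c *: y) =
      block_mx c%:M s%:M (- s)%:M c%:M *m col_mx x y by apply: submxMl.
  by rewrite mul_block_col !mul_scalar_mx.
suff -> : col_mx x y = block_mx c%:M (- s)%:M s%:M c%:M *m
    col_mx (c *: x + s *: y) ((- s) *: x + c *: y) by apply: submxMl.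
rewrite mul_block_col !mul_scalar_mx -[x in LHS](scale1r x) -[y in LHS](scale1r y) -cs2.
by congr col_mx; apply/rowP => j; rewrite !mxE; ring.
Qed.

Lemma exists_g_orthogonal_rotation G (p1 p2 p3 : 'rV[R]_3) : G^T = G ->
  oriented_orthonormal p1 p2 p3 -> metric_val G p1 p2 = 0 -> metric_val G p1 p3 = 0 ->
  exists q2 q3, [/\ oriented_orthonormal p1 q2 q3, g_orthogonal G p1 q2 q3 &
    (col_mx q2 q3 == col_mx p2 p3)%MS].
Proof.
move=> sym_G frame_p G12 G13.
have [c [s [cs2 diag_cs]]] :=
  rotation_diagonalises_sym2 (metric_val G p2 p2) (metric_val G p2 p3) (metric_val G p3 p3).
exists (c *: p2 + s *: p3), ((- s) *: p2 + c *: p3).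
split; [exact: oriented_orthonormal_rot | split | exact: eqmx_col_rot];
  rewrite !(metric_valDl, metric_valDr, metric_valZl, metric_valZr) ?G12 ?G13; try ring.
by rewrite (metric_valC p3 p2 sym_G) -diag_cs; ring.
Qed.

End PlaneRotations.

Lemma odd_size_eigenvector (F : rcfType) n (A : 'M[F]_n) :
  odd n -> exists l (v : 'rV_n), v != 0 /\ v *m A = l *: v.
Proof.
move=> odd_n; have [l root_l] : {l : F | root (char_poly A) l}.
  by apply: odd_poly_root; rewrite size_char_poly /= negbK.
have /eigenvalueP[v vA v_neq0] : eigenvalue A l by rewrite eigenvalue_root_char.
by exists l, v.
Qed.

Section FrameExistence.
Variable R : realType.
Implicit Types (x y v w : 'rV[R]_3) (G : 'M[R]_3).

Definition normalize x := (Num.sqrt (dot x x))^-1 *: x.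

Lemma dot_normalize x : x != 0 -> dot (normalize x) (normalize x) = 1.
Proof.
move=> x_neq0; have xx_gt0 := dot_gt0 x_neq0.
rewrite dotZl dotZr mulrA -expr2 exprVn sqr_sqrtr ?ltW // mulVf //.
exact: lt0r_neq0.
Qed.

Lemma unit_vector_neq0 x : dot x x = 1 -> x != 0.
Proof.
move=> xx; apply/eqP => x0; move: xx; rewrite x0 dotE !mxE !mulr0 !addr0 => /eqP.
by rewrite eq_sym oner_eq0.
Qed.

Lemma exists_unit_eigenvector G : exists l v, dot v v = 1 /\ v *m G = l *: v.
Proof.
have [l [v [v_neq0 vG]]] := odd_size_eigenvector G isT.
exists l, (normalize v); split; first exact: dot_normalize.
by rewrite -scalemxAl vG scalerA mulrC -scalerA.
Qed.

Lemma exists_orthogonal_unit v : dot v v = 1 -> exists w, dot w w = 1 /\ dot v w = 0.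
Proof.
move=> vv.
suff [w0 [w0_neq0 vw0]] : exists w0, w0 != 0 /\ dot v w0 = 0.
  by exists (normalize w0); rewrite dot_normalize // dotZr vw0 mulr0.
have [w0_eq0 | w0_neq0] := eqVneq (vec3 (- v 0 i2) (v 0 i1) 0) 0.
  have := congr1 (fun w => w 0 i1) w0_eq0; have := congr1 (fun w => w 0 i2) w0_eq0.
  rewrite /= !vec3E !mxE => v1 /eqP; rewrite oppr_eq0 => /eqP v2.
  exists (vec3 1 0 0); split; first by apply: unit_vector_neq0; rewrite dotE !vec3E; ring.
  by rewrite dotE !vec3E v1; ring.
by exists (vec3 (- v 0 i2) (v 0 i1) 0); split => //; rewrite dotE !vec3E; ring.
Qed.

Lemma metric_val_eigen G l v y : v *m G = l *: v -> metric_val G v y = l * dot v y.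
Proof. by move=> vG; rewrite /metric_val vG -scalemxAl mxE. Qed.

Lemma exists_g_orthogonal_frame G : G^T = G ->
  exists p1 p2 p3, oriented_orthonormal p1 p2 p3 /\ g_orthogonal G p1 p2 p3.
Proof.
move=> sym_G; have [l [v [vv vG]]] := exists_unit_eigenvector G.
have [w [ww vw]] := exists_orthogonal_unit vv.
have frame_vw := oriented_orthonormal_cross vv ww vw.
have [||q2 [q3 [frame_q orth_q _]]] := exists_g_orthogonal_rotation sym_G frame_vw.
- by rewrite (metric_val_eigen _ vG) vw mulr0.
- by rewrite (metric_val_eigen _ vG) dot_crossl mulr0.
by exists v, q2, q3.
Qed.

End FrameExistence.

Section MilnorFrames.
Variable R : realType.
Implicit Types (x y : 'rV[R]_3) (G : 'M[R]_3) (p : 'I_3 -> 'rV[R]_3).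

Definition half_frame p j := 2^-1 *: p j.

Lemma frame_mx_mul_tr p j k : (frame_mx p *m (frame_mx p)^T) j k = dot (p j) (p k).
Proof. by rewrite /dot !mxE; apply: eq_bigr => l _; rewrite !mxE. Qed.

Lemma frame_mx_orthogonal p : oriented_orthonormal (p i1) (p i2) (p i3) ->
  frame_mx p *m (frame_mx p)^T = 1%:M.
Proof.
move=> [[d11 d22 d33] [d12 d13 d23] _]; apply/matrixP => j k.
rewrite frame_mx_mul_tr !mxE.
by case: (ord3P j) => ->; case: (ord3P k) => ->;
  rewrite ?eqxx ?ord3_eqE ?(dotC (p i2) (p i1)) ?(dotC (p i3)).
Qed.

Lemma half_frame_right_inverse p : oriented_orthonormal (p i1) (p i2) (p i3) ->
  frame_mx (half_frame p) *m (2 *: (frame_mx p)^T) = 1%:M.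
Proof.
move=> frame_p.
have -> : frame_mx (half_frame p) = 2^-1 *: frame_mx p by apply/matrixP => j k; rewrite !mxE.
by rewrite -scalemxAl -scalemxAr frame_mx_orthogonal // scalerA mulVf ?scale1r ?pnatr_eq0.
Qed.

Lemma milnor_half_frame p :
  oriented_orthonormal (p i1) (p i2) (p i3) -> milnor_frame (half_frame p).
Proof.
move=> frame_p; have [_ _ [c12 c23 c31]] := frame_p.
split; first by have [] := mulmx1_unit (half_frame_right_inverse frame_p).
by rewrite /half_frame; split; [| split]; apply/is_bracketP;
  rewrite crossZl crossZr ?c12 ?c23 ?c31 !scalerA; congr (_ *: _); field.
Qed.

Lemma dual_form_half_frame p k x : oriented_orthonormal (p i1) (p i2) (p i3) ->
  dual_form (half_frame p) k x = 2 * dot x (p k).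
Proof.
move=> frame_p; rewrite /dual_form (invmx_right_inverse (half_frame_right_inverse frame_p)).
by rewrite -scalemxAr mxE /dot !mxE; congr (_ * _); apply: eq_bigr => l _; rewrite !mxE.
Qed.

Lemma frame_expansion p z : oriented_orthonormal (p i1) (p i2) (p i3) ->
  z = \sum_k dot z (p k) *: p k.
Proof.
move=> frame_p.
rewrite -[z in LHS]mulmx1 -(mulmx1C (frame_mx_orthogonal frame_p)) mulmxA mulmx_sum_row.
apply: eq_bigr => k _; rewrite rowK /dot !mxE; congr (_ *: _).
by apply: eq_bigr => l _; rewrite !mxE.
Qed.

Lemma metric_val_frame_expansion G p x y : G^T = G ->
  oriented_orthonormal (p i1) (p i2) (p i3) -> g_orthogonal G (p i1) (p i2) (p i3) ->
  metric_val G x y = \sum_k metric_val G (p k) (p k) * dot x (p k) * dot y (p k).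
Proof.
move=> sym_G frame_p [G12 G13 G23].
rewrite [in LHS](frame_expansion x frame_p) [in LHS](frame_expansion y frame_p) !sum3.
rewrite !(metric_valDl, metric_valDr, metric_valZl, metric_valZr).
rewrite (metric_valC (p i2) (p i1)) ?(metric_valC (p i3) (p i1)) ?(metric_valC (p i3) (p i2)) //.
by rewrite G12 G13 G23; ring.
Qed.

Lemma diag_milnor_half_frame G p : left_inv_metric G ->
  oriented_orthonormal (p i1) (p i2) (p i3) -> g_orthogonal G (p i1) (p i2) (p i3) ->
  diag_milnor_frame G (half_frame p) (fun k => Num.sqrt (metric_val G (p k) (p k)) / 2).
Proof.
move=> [sym_G pos_G] frame_p orth_p.
have pp_gt0 k : 0 < metric_val G (p k) (p k).
  have [[d11 d22 d33] _ _] := frame_p.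
  by apply: pos_G; apply: unit_vector_neq0; case: (ord3P k) => ->.
split; first exact: milnor_half_frame.
split=> [k | x y]; first by rewrite divr_gt0 ?sqrtr_gt0.
rewrite (metric_val_frame_expansion _ _ sym_G frame_p orth_p); apply: eq_bigr => k _.
by rewrite !dual_form_half_frame // expr_div_n sqr_sqrtr ?ltW //; field.
Qed.

Lemma exists_diag_milnor_frame G :
  left_inv_metric G -> exists X f, diag_milnor_frame G X f.
Proof.
move=> metric_G; have [p1 [p2 [p3 [frame_p orth_p]]]] := exists_g_orthogonal_frame metric_G.1.
pose p := frame3 p1 p2 p3.
exists (half_frame p), (fun k => Num.sqrt (metric_val G (p k) (p k)) / 2).
by apply: diag_milnor_half_frame; rewrite /p ?frame3E.
Qed.

End MilnorFrames.

Section FrameCharacterisations.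
Variable R : realType.
Implicit Types (x : 'rV[R]_3) (G : 'M[R]_3) (X : 'I_3 -> 'rV[R]_3) (f : 'I_3 -> R).

Lemma metric_val_ucoord G j k : metric_val G (ucoord j) (ucoord k) = G j k.
Proof. by rewrite /metric_val trmx_delta -rowE -colE !mxE. Qed.

Lemma metric_val_eq0 G x y : x *m G *m y^T = 0 <-> metric_val G x y = 0.
Proof.
rewrite /metric_val; split=> [-> | xy0]; first by rewrite mxE.
by apply/rowP => j; rewrite ord1 xy0 mxE.
Qed.

Lemma orthogonal_submx G x m1 m2 (A : 'M[R]_(m1, 3)) (B : 'M[R]_(m2, 3)) :
  (A <= B)%MS -> x *m G *m B^T = 0 -> x *m G *m A^T = 0.
Proof. by move=> /submxP[D ->]; rewrite trmx_mul mulmxA => ->; rewrite mul0mx. Qed.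

Lemma dual_form_frame X j k : frame_mx X \in unitmx -> dual_form X k (X j) = (j == k)%:R.
Proof.
by move=> unit_X; rewrite /dual_form -[X j](rowK X j) -row_mul mulmxV // !mxE.
Qed.

Lemma metric_val_diag_frame G X f j k : frame_mx X \in unitmx -> diagonalises G X f ->
  metric_val G (X j) (X k) = (j == k)%:R * f k ^+ 2.
Proof.
move=> unit_X [_ diag_X]; rewrite diag_X (bigD1 k) //= big1 => [|l l_neq_k].
  by rewrite !dual_form_frame // eqxx addr0 mulr1 mulrC.
by rewrite !dual_form_frame // (eq_sym k) (negbTE l_neq_k) mulr0.
Qed.

Lemma u1_orthogonal_milnor_frameP G : left_inv_metric G ->
  (exists X f, diag_milnor_frame G X f /\ (exists c : R, X i1 = c *: ucoord i1) /\
     (col_mx (X i2) (X i3) == col_mx (ucoord i2) (ucoord i3))%MS) <->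
  u1_orthogonal G.
Proof.
move=> metric_G; split=> [[X [f [[[unit_X _] diag_X] [[c X1] span_X]]]] | [G12 G13]].
  have c_neq0 : c != 0.
    apply/eqP => c0; have := dual_form_frame i1 i1 unit_X.
    by rewrite X1 c0 scale0r /dual_form mul0mx mxE eqxx => /eqP; rewrite eq_sym oner_eq0.
  have X1_orth j : i1 != j -> metric_val G (ucoord i1) (X j) = 0.
    move=> j_neq1; have := metric_val_diag_frame i1 j unit_X diag_X.
    rewrite X1 metric_valZl (negbTE j_neq1) mul0r => /eqP.
    by rewrite mulf_eq0 (negbTE c_neq0) => /eqP.
  have /eqP : ucoord i1 *m G *m (col_mx (ucoord i2) (ucoord i3))^T = 0.
    apply: orthogonal_submx (proj2 (andP span_X)) _.
    by rewrite tr_col_mx mul_mx_row !(proj2 (metric_val_eq0 _ _ _)) ?X1_orth ?ord3_eqE ?row_mx0.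
  rewrite tr_col_mx mul_mx_row row_mx_eq0 => /andP[/eqP u12 /eqP u13].
  by split; rewrite -metric_val_ucoord; apply/metric_val_eq0.
have [||q2 [q3 [frame_q orth_q span_q]]] :=
  exists_g_orthogonal_rotation metric_G.1 (oriented_orthonormal_ucoord R);
  rewrite ?metric_val_ucoord //.
pose p := frame3 (ucoord i1) q2 q3.
exists (half_frame p), (fun k => Num.sqrt (metric_val G (p k) (p k)) / 2).
split; first by apply: diag_milnor_half_frame; rewrite /p ?frame3E.
split; first by exists 2^-1; rewrite /half_frame /p frame3E.
rewrite /half_frame /p !frame3E -scale_col_mx; apply/eqmxP.
by apply: eqmx_trans (eqmx_scale _ _) (eqmxP span_q); rewrite invr_eq0 pnatr_eq0.
Qed.

Lemma axisymmetric_milnor_frameP G : left_inv_metric G ->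
  (exists f, diag_milnor_frame G (fun j => 2^-1 *: ucoord j) f /\ f i2 = f i3) <->
  u1_axisymmetric G.
Proof.
move=> metric_G; split=> [[f [[[unit_X _] diag_X] f23]] | [G12 G13 G23 G22]].
  have GE j k : G j k = 4 * ((j == k)%:R * f k ^+ 2).
    rewrite -(metric_val_diag_frame j k unit_X diag_X) metric_valZl metric_valZr.
    by rewrite metric_val_ucoord; field.
  by split; rewrite !GE ?ord3_eqE ?eqxx ?f23 /=; ring.
exists (fun k => Num.sqrt (metric_val G (ucoord k) (ucoord k)) / 2); split.
  apply: (diag_milnor_half_frame (p := ucoord) metric_G (oriented_orthonormal_ucoord R)).
  by split; rewrite metric_val_ucoord.
by rewrite !metric_val_ucoord G22.
Qed.

End FrameCharacterisations.

Theorem proposition2p1 (R : realType) (G : 'M[R]_3) :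
  left_inv_metric G ->
  (exists (X : 'I_3 -> 'rV[R]_3) (f : 'I_3 -> R), diag_milnor_frame G X f) /\
  (forall n : nat, (0 < n)%N ->
    (passes_to_quotient G n <->
      [\/ n = 1%N \/ n = 2%N,
          n = 4%N /\
          (exists (X : 'I_3 -> 'rV[R]_3) (f : 'I_3 -> R),
             diag_milnor_frame G X f /\
             (exists c : R, X i1 = c *: ucoord i1) /\
             (col_mx (X i2) (X i3) == col_mx (ucoord i2) (ucoord i3))%MS)
        | [/\ n <> 1%N, n <> 2%N, n <> 4%N &
             exists f : 'I_3 -> R,
               diag_milnor_frame G (fun j => 2^-1 *: ucoord j) f /\
               f i2 = f i3]])).
Proof.
move=> metric_G; split; first exact: exists_diag_milnor_frame.
have sym_G := metric_G.1; move=> n n_gt0.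
have [n12 | [n1 n2]] : (n = 1 \/ n = 2)%N \/ (n <> 1 /\ n <> 2)%N by lia.
  by split=> _; [constructor 1 | exact: passes_to_quotient_trivial].
have [-> | /eqP n4] := eqVneq n 4.
  rewrite passes_to_quotient4P // -u1_orthogonal_milnor_frameP //.
  by split=> [frame_G | [[] | [] | []]] //; constructor 2.
rewrite passes_to_quotient_genericP // -axisymmetric_milnor_frameP //.
by split=> [frame_G | [[] | [] | []]] //; constructor 3.
Qed.
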